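(* Let $A\subset\mathbb{Z}$ be an extremal set with cardinality $k$ which is the union of two segments. Then $A$ is Freiman isomorphic of order 2 to one of the following sets: (i) $[0,k+b-1]\setminus[1,b]\subset\mathbb{Z}$ for some $1\le b\le k-3$, with $\dim(A)=1$, $\mathrm{vol}(A)=k+b$ and $|2A|=2k-1+b$; or (ii) $([0,k_1-1]\times\{0\})\cup([0,k_2-1]\times\{1\})\subset\mathbb{Z}^2$ with $k_1+k_2=k$, $k_1,k_2\ge1$, $\dim(A)=2$, $\mathrm{vol}(A)=k$ and $|2A|=3k-3$.
   Context: For integers $x\le y$, $[x,y]=\{n\in\mathbb{Z}:x\le n\le y\}$; $2A=A+A$. Sets $A\subset G$, $B\subset G'$ in abelian groups are Freiman isomorphic of order 2 ($F_2$-isomorphic) if there is a bijection $\phi:A\to B$ with $x+y=z+t\iff\phi(x)+\phi(y)=\phi(z)+\phi(t)$ for all $x,y,z,t\in A$. The dimension $\dim(A)$ is the largest $d$ such that some $B\subset\mathbb{Z}^d$ not contained in a hyperplane is $F_2$-isomorphic to $A$. The volume $\mathrm{vol}(A)$ of a $d$-dimensional set is the minimum of $|\mathrm{conv}(B)\cap\mathbb{Z}^d|$ over $B\subset\mathbb{Z}^d$ $F_2$-isomorphic to $A$. Let $\mathrm{vol}(k,T,d)=\max\{\mathrm{vol}(A):A\subset\mathbb{N},|A|=k,|2A|=T,\dim(A)=d\}$; $A$ is extremal if $\mathrm{vol}(A)=\mathrm{vol}(|A|,|2A|,\dim(A))$. A segment is a nonempty set of consecutive integers; $A\subset\mathbb{Z}$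 is the union of $s$ segments if $A=P_1\cup\dots\cup P_s$ with $P_i$ segments of lengths $k_i$, $\max P_i+1<\min P_{i+1}$ for $1\le i<s$, and $k_i>1$ for some $i$. *)

From HB Require Import structures.
From mathcomp Require Import all_boot all_order all_algebra.
From mathcomp Require Import finmap.
Set Implicit Arguments. Unset Strict Implicit. Unset Printing Implicit Defensive.
Import Order.TTheory GRing.Theory Num.Theory.
Local Open Scope ring_scope.


Definition sumset (G : zmodType) (A : {fset G}) : {fset G} :=
  [fset (x + y)%R | x in A, y in A]%fset.

Definition F2iso (G G' : zmodType) (A : {fset G}) (B : {fset G'}) : Prop :=
  exists phi : G -> G',
    {in A &, injective phi} /\ [fset phi x | x in A]%fset = B /\
    forall x y z t, x \in A -> y \in A -> z \in A -> t \in A ->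
      ((x + y)%R == (z + t)%R) = ((phi x + phi y)%R == (phi z + phi t)%R).

(* Z^d is modelled by 'rV[int]_d; B lies in an affine hyperplane
   {p | a . p = c} with a <> 0 (rational coefficients). *)
Definition in_hyperplane (d : nat) (B : {fset 'rV[int]_d}) : Prop :=
  exists (a : 'rV[rat]_d) (c : rat), a != 0 /\
    forall p, p \in B -> \sum_(i < d) a 0 i * (p 0 i)%:~R = c.

(* p lies in the convex hull of B (convex combinations with rational
   weights; for rational points this coincides with the real hull). *)
Definition in_conv (d : nat) (B : {fset 'rV[int]_d}) (p : 'rV[int]_d) : Prop :=
  exists w : 'rV[int]_d -> rat,
    (forall b, b \in B -> 0 <= w b) /\
    \sum_(b <- B) w b = 1 /\
    forall i : 'I_d, \sum_(b <- B) w b * (b 0 i)%:~R = (p 0 i)%:~R.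

Definition conv_lattice_count (d : nat) (B : {fset 'rV[int]_d}) (n : nat) : Prop :=
  exists S : {fset 'rV[int]_d}, (forall p, p \in S <-> in_conv B p) /\ #|` S| = n.

Definition is_dim (G : zmodType) (A : {fset G}) (d : nat) : Prop :=
  (exists B : {fset 'rV[int]_d}, ~ in_hyperplane B /\ F2iso A B) /\
  forall (d' : nat) (B : {fset 'rV[int]_d'}),
    ~ in_hyperplane B -> F2iso A B -> (d' <= d)%N.

Definition is_vol (G : zmodType) (A : {fset G}) (v : nat) : Prop :=
  exists d, is_dim A d /\
    (exists B : {fset 'rV[int]_d}, F2iso A B /\ conv_lattice_count B v) /\
    forall (B : {fset 'rV[int]_d}) (n : nat),
      F2iso A B -> conv_lattice_count B n -> (v <= n)%N.

Definition nat_set (A : {fset int}) : Prop := forall x, x \in A -> 0 <= x.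

Definition is_volmax (k T d v : nat) : Prop :=
  (exists A : {fset int}, [/\ nat_set A, #|` A| = k, #|` sumset A| = T,
                             is_dim A d & is_vol A v]) /\
  forall (A : {fset int}) (w : nat), nat_set A -> #|` A| = k ->
    #|` sumset A| = T -> is_dim A d -> is_vol A w -> (w <= v)%N.

Definition extremal (A : {fset int}) : Prop :=
  exists d v, [/\ is_dim A d, is_vol A v & is_volmax #|` A| #|` sumset A| d v].

Definition union_two_segments (A : {fset int}) : Prop :=
  exists a1 b1 a2 b2 : int,
    [/\ a1 <= b1, b1 + 1 < a2, a2 <= b2, (a1 < b1) || (a2 < b2) &
        forall x, (x \in A) = ((a1 <= x <= b1) || (a2 <= x <= b2))].

Definition seg0 (n : nat) : {fset int} := [fset (i%:Z) | i in iota 0 n]%fset.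

Definition set_i (k b : nat) : {fset int} :=
  (seg0 (k + b) `\` [fset (i%:Z) | i in iota 1 b])%fset.

Definition point2 (x y : int) : 'rV[int]_2 :=
  \row_(j < 2) (if j == ord0 then x else y).

Definition set_ii (k1 k2 : nat) : {fset 'rV[int]_2} :=
  ([fset point2 (i%:Z) 0 | i in iota 0 k1] `|` [fset point2 (i%:Z) 1 | i in iota 0 k2])%fset.

(* After an affine change of variable, A is [0, k1) u [k1 + g, k1 + g + k2) with
   k1 <= k2. A Freiman 2-isomorphism is affine on each segment, with a common step
   because 0 + (a + 1) = 1 + a for a = k1 + g; so every model of A lies in a plane.
   If k1, k2 <= g + 1, A is isomorphic to the two-row set (ii), whose convex hull
   has no further lattice points, and A is two-dimensional of volume k. If
   k2 >= g + 2, the relation (k1 - 1) + (a + g + 1) = a + a puts both segments on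
   one line: A is one-dimensional of volume k + g. When moreover k1 >= 2, the set
   {0} u [b + 1, b + k) with b = min(2g, k1 + g - 1) has the same size, doubling
   and dimension as A but volume k + b > k + g, so A is not extremal; hence k1 = 1
   and A is the set (i). *)

From HB Require Import structures.
From mathcomp Require Import all_boot all_order all_algebra.
From mathcomp Require Import finmap zify ring.
Import Order.TTheory GRing.Theory Num.Theory.
Set Implicit Arguments. Unset Strict Implicit. Unset Printing Implicit Defensive.
Local Open Scope fset_scope.
Local Open Scope ring_scope.

Lemma card_imfset_fibres (T U : choiceType) (P : {fset T}) (f : T -> U) :
  #|` f @` P| = #|` [fset [fset q in P | f q == f p] | p in P]|.
Proof.
pose fibre u := [fset q in P | f q == u].
rewrite (imfset_comp _ f fibre) [RHS]card_in_imfset; first by [].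
move=> _ _ /imfsetP[p hp ->] /imfsetP[q _ ->] /fsetP /(_ p).
rewrite /fibre !in_fsetE /= !inE eqxx andbT => e.
by move: hp; rewrite [_ \in _]e => /andP[_ /eqP].
Qed.

Lemma card_imfset_kernel (T U V : choiceType) (P : {fset T}) (f : T -> U) (g : T -> V) :
  {in P &, forall p q, (f p == f q) = (g p == g q)} -> #|` f @` P| = #|` g @` P|.
Proof.
move=> fg; rewrite card_imfset_fibres [RHS]card_imfset_fibres; congr #|` _|.
rewrite (@eq_in_imfset _ _ _ _ (fun p => [fset q in P | g q == g p])) // => p hp.
by apply/fsetP => q; rewrite !in_fsetE /= !inE; apply/andP/andP => -[hq e]; rewrite ?fg // -?fg.
Qed.

Lemma sumsetE (G : zmodType) (A : {fset G}) :
  sumset A = [fset p.1 + p.2 | p in A `*` A].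
Proof.
apply/fsetP => s; apply/imfset2P/imfsetP => /=.
  by case=> x hx [y hy ->]; exists (x, y); rewrite // in_fsetM hx.
by case=> -[x y]; rewrite in_fsetM /= => /andP[hx hy] ->; exists x => //; exists y.
Qed.

Lemma F2iso_sym (G G' : zmodType) (A : {fset G}) (B : {fset G'}) :
  F2iso A B -> F2iso B A.
Proof.
case=> phi [inj [<- hphi]].
pose psi y := head 0 [seq x <- A | phi x == y].
have psiK : {in A, cancel phi psi}.
  move=> x hx; rewrite /psi; have : x \in [seq x' <- A | phi x' == phi x].
    by rewrite mem_filter eqxx.
  case E: [seq _ <- _ | _] => [|y s] //= _.
  have : y \in [seq x' <- A | phi x' == phi x] by rewrite E mem_head.
  by rewrite mem_filter => /andP[/eqP e hy]; apply: inj.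
exists psi; split; [|split].
- by move=> _ _ /imfsetP[x hx ->] /imfsetP[y hy ->]; rewrite !psiK // => ->.
- apply/fsetP => x; apply/imfsetP/idP => [[_ /imfsetP[y hy ->] ->]|hx].
    by rewrite psiK.
  by exists (phi x); rewrite ?psiK ?in_imfset.
- move=> _ _ _ _ /imfsetP[x hx ->] /imfsetP[y hy ->] /imfsetP[z hz ->] /imfsetP[t ht ->].
  by rewrite !psiK // hphi.
Qed.

Lemma F2iso_trans (G1 G2 G3 : zmodType) (A : {fset G1}) (B : {fset G2}) (C : {fset G3}) :
  F2iso A B -> F2iso B C -> F2iso A C.
Proof.
case=> phi [inj1 [<- h1]] [psi [inj2 [<- h2]]].
have phiA x : x \in A -> phi x \in phi @` A by move=> hx; rewrite in_imfset.
exists (psi \o phi); split; [|split].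
- by move=> x y hx hy /= e; apply: inj1 => //; apply: inj2; rewrite ?phiA.
- by rewrite -imfset_comp.
- by move=> x y z t hx hy hz ht /=; rewrite h1 // h2 // phiA.
Qed.

Lemma card_F2iso (G G' : zmodType) (A : {fset G}) (B : {fset G'}) :
  F2iso A B -> #|` A| = #|` B|.
Proof. by case=> phi [inj [<- _]]; rewrite card_in_imfset. Qed.

Lemma card_sumset_F2iso (G G' : zmodType) (A : {fset G}) (B : {fset G'}) :
  F2iso A B -> #|` sumset A| = #|` sumset B|.
Proof.
case=> phi [_ [<- hphi]].
have -> : sumset (phi @` A) = [fset phi p.1 + phi p.2 | p in A `*` A].
  rewrite sumsetE; apply/fsetP => s; apply/imfsetP/imfsetP => /=.
    case=> -[a b]; rewrite in_fsetM => /andP[/imfsetP[x hx ->] /imfsetP[y hy ->]] ->.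
    by exists (x, y); rewrite ?in_fsetM /= ?hx.
  by case=> -[x y]; rewrite in_fsetM /= => /andP[hx hy] ->; exists (phi x, phi y);
    rewrite ?in_fsetM /= ?in_imfset.
rewrite sumsetE; apply: card_imfset_kernel => -[x y] [z t].
by rewrite !in_fsetM => /andP[hx hy] /andP[hz ht]; apply: hphi.
Qed.

Lemma is_dim_F2iso (G G' : zmodType) (A : {fset G}) (A' : {fset G'}) d :
  F2iso A A' -> is_dim A d -> is_dim A' d.
Proof.
move=> iso [[B [nB iB]] hd]; split.
  by exists B; split => //; apply: F2iso_trans iB; apply: F2iso_sym.
by move=> d' B' nB' iB'; apply: (hd d' B') => //; apply: F2iso_trans iB'.
Qed.

Lemma is_vol_F2iso (G G' : zmodType) (A : {fset G}) (A' : {fset G'}) v :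
  F2iso A A' -> is_vol A v -> is_vol A' v.
Proof.
move=> iso [d [hd [[B [iB cB]] hv]]]; exists d; split; first exact: is_dim_F2iso hd.
split; first by exists B; split => //; apply: F2iso_trans iB; apply: F2iso_sym.
by move=> B' n iB' cB'; apply: (hv B' n) => //; apply: F2iso_trans iB'.
Qed.

Lemma is_dim_unique (G : zmodType) (A : {fset G}) d d' :
  is_dim A d -> is_dim A d' -> d = d'.
Proof.
move=> [[B [nB iB]] hB] [[B' [nB' iB']] hB'].
by apply/eqP; rewrite eqn_leq (hB' _ B) // (hB _ B').
Qed.

Lemma is_vol_unique (G : zmodType) (A : {fset G}) v v' :
  is_vol A v -> is_vol A v' -> v = v'.
Proof.
move=> [d [hd [[B [iB cB]] hv]]] [d' [hd' [[B' [iB' cB']] hv']]].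
move: B' iB' cB' hv'; rewrite -(is_dim_unique hd hd') => B' iB' cB' hv'.
by apply/eqP; rewrite eqn_leq (hv B' v') // (hv' B v).
Qed.

Lemma extremal_F2iso (A A' : {fset int}) : F2iso A A' -> extremal A -> extremal A'.
Proof.
move=> iso [d [v [hd hv]]]; rewrite (card_F2iso iso) (card_sumset_F2iso iso) => hmax.
by exists d, v; split; [apply: is_dim_F2iso hd | apply: is_vol_F2iso hv |].
Qed.

Definition segment (a : int) (n : nat) : {fset int} := [fset a + i%:Z | i in iota 0 n].

Lemma in_segment a n x : (x \in segment a n) = (a <= x < a + n%:Z).
Proof.
apply/imfsetP/idP => /= [[i]|hx]; first by rewrite mem_iota => /andP[_ hi] ->; lia.
by exists (absz (x - a)); rewrite ?mem_iota; lia.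
Qed.

Lemma card_segment a n : #|` segment a n| = n.
Proof.
rewrite card_in_imfset /=; first by rewrite undup_id ?iota_uniq // size_iota.
by move=> i j _ _ /=; lia.
Qed.

Definition twoseg (k1 g k2 : nat) : {fset int} := segment 0 k1 `|` segment (k1 + g)%:Z k2.

Lemma in_twoseg k1 g k2 x :
  (x \in twoseg k1 g k2) = (0 <= x < k1%:Z) || ((k1 + g)%:Z <= x < (k1 + g + k2)%:Z).
Proof. by rewrite in_fsetU !in_segment; apply/idP/idP; lia. Qed.

Lemma card_fsetU_disjoint (T : choiceType) (A B : {fset T}) :
  [disjoint A & B] -> #|` A `|` B| = (#|` A| + #|` B|)%N.
Proof. by move=> AB; apply/eqP; rewrite (leq_card_fsetU A B).2. Qed.

Lemma card_twoseg k1 g k2 : (1 <= g)%N -> #|` twoseg k1 g k2| = (k1 + k2)%N.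
Proof.
move=> g_gt0; rewrite card_fsetU_disjoint ?card_segment //.
by apply/fdisjointP => x; rewrite !in_segment; lia.
Qed.

Definition F2iso_on (G G' : zmodType) (A : {fset G}) (phi : G -> G') : Prop :=
  forall x y z t, x \in A -> y \in A -> z \in A -> t \in A ->
    (x + y == z + t) = (phi x + phi y == phi z + phi t).

Definition F2hom (G G' : zmodType) (A : {fset G}) (phi : G -> G') : Prop :=
  forall x y z t, x \in A -> y \in A -> z \in A -> t \in A ->
    x + y = z + t -> phi x + phi y = phi z + phi t.

Lemma F2iso_on_hom (G G' : zmodType) (A : {fset G}) (phi : G -> G') :
  F2iso_on A phi -> F2hom A phi.
Proof. by move=> hphi x y z t hx hy hz ht e; apply/eqP; rewrite -hphi // e. Qed.

Lemma sub_eq_of_add_eq (V : zmodType) (a b c d : V) : a + d = b + c -> a - b = c - d.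
Proof. by move=> e; apply/eqP; rewrite subr_eq addrAC (addrC c) -e addrK. Qed.

Lemma F2hom_segment (V : zmodType) (A : {fset int}) (phi : int -> V) (lo hi : int) :
  F2hom A phi -> (forall x, lo <= x <= hi -> x \in A) ->
  forall x, lo <= x <= hi -> phi x = phi lo + (phi (lo + 1) - phi lo) *~ (x - lo).
Proof.
move=> hphi segA; set v := phi (lo + 1) - phi lo.
have step n : lo + n.+1%:Z <= hi -> phi (lo + n.+1%:Z) - phi (lo + n%:Z) = v.
  elim: n => [|n IH] hn; first by rewrite addr0.
  have rel : phi (lo + n.+2%:Z) + phi (lo + n%:Z) = phi (lo + n.+1%:Z) + phi (lo + n.+1%:Z).
    by apply: hphi; rewrite ?segA //; lia.
  by rewrite -(IH ltac:(lia)); apply: sub_eq_of_add_eq.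
have from_lo n : lo + n%:Z <= hi -> phi (lo + n%:Z) = phi lo + v *~ n.
  elim: n => [|n IH] hn; first by rewrite addr0 mulr0z addr0.
  rewrite -(subrK (phi (lo + n%:Z)) (phi _)) step // IH; last by lia.
  by rewrite intS mulrzDr mulr1z addrCA.
move=> x hx; have -> : x = lo + (absz (x - lo))%:Z by lia.
by rewrite from_lo; [congr (_ + _ *~ _) | ]; lia.
Qed.

Section FreimanHomOnTwoSegments.
Variables (V : zmodType) (k1 g k2 : nat) (phi : int -> V).
Hypotheses (k1_gt0 : (1 <= k1)%N) (k2_gt1 : (2 <= k2)%N) (hphi : F2hom (twoseg k1 g k2) phi).

Let a2 : int := (k1 + g)%:Z.
Let v := phi (a2 + 1) - phi a2.

Lemma F2hom_twoseg x : x \in twoseg k1 g k2 ->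
  phi x = if x < a2 then phi 0 + v *~ x else phi a2 + v *~ (x - a2).
Proof.
rewrite in_twoseg => hx; case: ifP => hxa2; rewrite /a2 in hxa2.
  have -> : phi x = phi 0 + (phi (0 + 1) - phi 0) *~ (x - 0).
    by apply: (F2hom_segment (hi := k1%:Z - 1) hphi) => [y|]; rewrite ?in_twoseg; lia.
  have [->|x_ne0] := eqVneq x 0; first by rewrite !mulr0z.
  rewrite add0r subr0; congr (_ + _ *~ _); apply: sub_eq_of_add_eq.
  by apply: hphi; rewrite ?in_twoseg /a2 //; lia.
by apply: (F2hom_segment (hi := a2 + k2%:Z - 1) hphi) => [y|]; rewrite ?in_twoseg /a2; lia.
Qed.

Lemma F2hom_twoseg_line : (g + 2 <= k2)%N ->
  forall x, x \in twoseg k1 g k2 -> phi x = phi 0 + v *~ x.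
Proof.
move=> k2_large.
have rel : phi (k1%:Z - 1) + phi (a2 + g.+1%:Z) = phi a2 + phi a2.
  by apply: hphi; rewrite ?in_twoseg /a2 //; lia.
rewrite [phi (k1%:Z - 1)]F2hom_twoseg ?[phi (a2 + _)]F2hom_twoseg ?in_twoseg /a2 in rel; try lia.
rewrite ifT ?ifF in rel; try lia.
have phi_a2 : phi a2 = phi 0 + v *~ a2.
  rewrite -[a2 in RHS](_ : k1%:Z - 1 + (a2 + g.+1%:Z - a2) = a2); last by rewrite /a2; lia.
  by apply: (addIr (phi a2)); rewrite -[LHS]rel (mulrzDr v (k1%:Z - 1)) !addrA [RHS]addrAC.
move=> x /F2hom_twoseg ->; case: ifP => // _.
by rewrite phi_a2 -addrA -mulrzDr [a2 + _]addrC subrK.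
Qed.

Lemma F2hom_twoseg_plane x : x \in twoseg k1 g k2 ->
  exists s t : int, phi x = phi 0 + v *~ s + (phi a2 - phi 0) *~ t.
Proof.
move=> /F2hom_twoseg ->; case: ifP => _; first by exists x, 0; rewrite mulr0z addr0.
by exists (x - a2), 1; rewrite mulr1z addrAC [phi 0 + _]addrC subrK.
Qed.

End FreimanHomOnTwoSegments.

Lemma exists_nonzero_kernel_row (F : fieldType) m n (M : 'M[F]_(m, n)) :
  (n < m)%N -> exists2 a : 'rV_m, a != 0 & a *m M = 0.
Proof.
move=> nm; have : kermx M != 0 by rewrite -mxrank_eq0 mxrank_ker; have := rank_leq_col M; lia.
case/matrix0Pn => i [j kij]; exists (row i (kermx M)).
  by apply: contraNneq kij => /rowP /(_ j); rewrite !mxE => ->.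
by rewrite -row_mul mulmx_ker row0.
Qed.

Lemma in_hyperplane_affine_span d r (B : {fset 'rV[int]_d}) (p : 'rV[int]_d)
    (M : 'M[int]_(r, d)) :
  (r < d)%N -> (forall b, b \in B -> exists c : 'rV[int]_r, b = p + c *m M) ->
  in_hyperplane B.
Proof.
move=> rd spanB; pose toQ (N : 'M[int]_(_, _)) := map_mx (intr : int -> rat) N.
have [a a0 aM] := exists_nonzero_kernel_row (toQ _ _ M)^T rd.
have dotE (b : 'rV[int]_d) : \sum_(i < d) a 0 i * (b 0 i)%:~R = (a *m (toQ _ _ b)^T) 0 0.
  by rewrite mxE; apply: eq_bigr => i _; rewrite !mxE.
exists a, ((a *m (toQ _ _ p)^T) 0 0); split => // b /spanB[c ->].
by rewrite dotE /toQ map_mxD map_mxM linearD /= trmx_mul mulmxDr mulmxA aM mul0mx addr0.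
Qed.

Lemma scaler_intE d (v : 'rV[int]_d) (s : int) : s *: v = v *~ s.
Proof. by rewrite -scaler_int intz. Qed.

Lemma in_hyperplane_line d (B : {fset 'rV[int]_d}) p v :
  (1 < d)%N -> (forall b, b \in B -> exists s : int, b = p + v *~ s) -> in_hyperplane B.
Proof.
move=> d_gt1 onB; apply: (in_hyperplane_affine_span (M := v) d_gt1) => b /onB[s ->].
by exists s%:M; rewrite mul_scalar_mx scaler_intE.
Qed.

Lemma in_hyperplane_plane d (B : {fset 'rV[int]_d}) p v w :
  (2 < d)%N -> (forall b, b \in B -> exists s t : int, b = p + v *~ s + w *~ t) ->
  in_hyperplane B.
Proof.
move=> d_gt2 onB; apply: (in_hyperplane_affine_span (M := col_mx v w) d_gt2).
move=> b /onB[s [t ->]]; exists (row_mx s%:M t%:M).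
by rewrite mul_row_col !mul_scalar_mx !scaler_intE addrA.
Qed.

Lemma sum_fset_if_eq (R : nmodType) (T : choiceType) (B : {fset T}) b (F : T -> R) :
  b \in B -> \sum_(x <- B) (if x == b then F x else 0) = F b.
Proof.
move=> hb; rewrite (bigD1_seq b) ?fset_uniq //= eqxx big1 ?addr0 //.
by move=> x /negbTE ->.
Qed.

Section ConvexHull.
Variables (d : nat) (B : {fset 'rV[int]_d}).

Lemma in_conv_mem b : b \in B -> in_conv B b.
Proof.
move=> hb; exists (fun x => if x == b then 1 else 0); split; [|split].
- by move=> x _; case: ifP.
- exact: sum_fset_if_eq.
- move=> i; under eq_bigr => x _ do rewrite (fun_if (fun y => y * _)) mul0r.
  by rewrite sum_fset_if_eq // mul1r.
Qed.

Lemma in_conv_progression p v (m j : nat) :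
  p \in B -> p + m%:Z *: v \in B -> (j <= m)%N -> in_conv B (p + j%:Z *: v).
Proof.
move=> hp hq; have [-> | m_gt0] := posnP m.
  by rewrite leqn0 => /eqP ->; rewrite scale0r addr0; apply: in_conv_mem.
move=> jm; set q := p + m%:Z *: v.
pose t : rat := j%:R / m%:R.
have m0 : (m%:R : rat) != 0 by rewrite pnatr_eq0 -lt0n.
exists (fun x => (if x == p then 1 - t else 0) + (if x == q then t else 0)); split; [|split].
- move=> b _; apply: addr_ge0; case: ifP => // _.
    by rewrite subr_ge0 ler_pdivrMr ?ltr0n // mul1r ler_nat.
  by rewrite divr_ge0 ?ler0n.
- by rewrite big_split /= !sum_fset_if_eq // subrK.
- move=> i; under eq_bigr => x _ do
    rewrite mulrDl (fun_if (fun y => y * _)) (fun_if (fun y => y * _)) !mul0r.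
  rewrite big_split /= !sum_fset_if_eq // /q /t !mxE !intrD !intrM /=.
  by field.
Qed.

Lemma in_conv_le (a : 'rV[int]_d) (c : int) p :
  (forall b, b \in B -> \sum_(i < d) a 0 i * b 0 i <= c) -> in_conv B p ->
  \sum_(i < d) a 0 i * p 0 i <= c.
Proof.
move=> hB [w [w_ge0 [w_sum1 wp]]].
rewrite -(ler_int rat) rmorph_sum /=.
have -> : \sum_(i < d) ((a 0 i * p 0 i)%:~R : rat) =
          \sum_(b <- B) w b * (\sum_(i < d) a 0 i * b 0 i)%:~R.
  rewrite (eq_bigr (fun i => (a 0 i)%:~R * \sum_(b <- B) w b * (b 0 i)%:~R)); last first.
    by move=> i _; rewrite rmorphM wp.
  under eq_bigr => i _ do rewrite mulr_sumr.
  rewrite exchange_big /=; apply: eq_bigr => b _.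
  by rewrite rmorph_sum mulr_sumr; apply: eq_bigr => i _; rewrite rmorphM mulrCA.
have -> : (c%:~R : rat) = \sum_(b <- B) w b * c%:~R by rewrite -mulr_suml w_sum1 mul1r.
rewrite big_seq [X in _ <= X]big_seq; apply: ler_sum => b hb.
by rewrite ler_wpM2l ?w_ge0 // ler_int hB.
Qed.

End ConvexHull.

Lemma scalemx_intI m n (M : 'M[int]_(m, n)) (i j : int) : M != 0 -> i *: M = j *: M -> i = j.
Proof.
by case/matrix0Pn => a [k hk] /matrixP /(_ a k); rewrite !mxE; apply: mulIf.
Qed.

Lemma conv_lattice_count_ge_card d (B : {fset 'rV[int]_d}) n :
  conv_lattice_count B n -> (#|` B| <= n)%N.
Proof.
case=> S [hS <-]; apply: fsubset_leq_card; apply/fsubsetP => b hb.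
by apply/hS/in_conv_mem.
Qed.

Lemma conv_lattice_count_ge_progression d (B : {fset 'rV[int]_d}) p v (m n : nat) :
  v != 0 -> p \in B -> p + m%:Z *: v \in B -> conv_lattice_count B n -> (m.+1 <= n)%N.
Proof.
move=> v0 hp hq [S [hS <-]].
have card_prog k : #|` [fset p + j%:Z *: v | j in iota 0 k]| = k.
  rewrite card_in_imfset /=; first by rewrite undup_id ?iota_uniq // size_iota.
  by move=> i j _ _ /= /addrI /(scalemx_intI v0) [].
rewrite -[m.+1]card_prog; apply: fsubset_leq_card; apply/fsubsetP => x.
case/imfsetP => j hj ->; have {}hj : (j <= m)%N by move: hj; rewrite mem_iota.
by apply/hS; exact: in_conv_progression hp hq hj.
Qed.

Definition row1 (x : int) : 'rV[int]_1 := const_mx x.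

Lemma row1D x y : row1 x + row1 y = row1 (x + y).
Proof. by apply/rowP => i; rewrite !mxE. Qed.

Lemma row1_inj : injective row1.
Proof. by move=> x y /rowP /(_ 0); rewrite !mxE. Qed.

Lemma F2iso_row1 (A : {fset int}) : F2iso A (row1 @` A).
Proof.
exists row1; split; [|split] => //; first by move=> x y _ _; apply: row1_inj.
by move=> x y z t _ _ _ _; rewrite !row1D (inj_eq row1_inj).
Qed.

Lemma row1_not_in_hyperplane (A : {fset int}) x y :
  x \in A -> y \in A -> x != y -> ~ in_hyperplane (row1 @` A).
Proof.
move=> hx hy xy [a [c [a0 hA]]].
have := hA (row1 x) (in_imfset _ _ hx); have := hA (row1 y) (in_imfset _ _ hy).
rewrite !big_ord1 !mxE => ey ex.
have : a 0 0 * (x - y)%:~R = 0 by rewrite intrB mulrBr ex ey subrr.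
move/eqP; rewrite mulf_eq0 intr_eq0 subr_eq0 (negbTE xy) orbF => /eqP a00.
by move/negP: a0; apply; apply/eqP/rowP => i; rewrite (ord1 i) mxE.
Qed.

Lemma conv_lattice_count_row1 (A : {fset int}) lo (m : nat) :
  (forall x, x \in A -> lo <= x <= lo + m%:Z) -> lo \in A -> lo + m%:Z \in A ->
  conv_lattice_count (row1 @` A) m.+1.
Proof.
move=> boundA hlo hhi.
have row1E j : row1 (lo + j) = row1 lo + j *: row1 1.
  by apply/rowP => i; rewrite !mxE mulr1.
exists (row1 @` segment lo m.+1); split.
  2: by rewrite card_in_imfset ?card_segment //; apply: in2W row1_inj.
move=> p; split => [/imfsetP[x /= /[!in_segment] hx ->] | p_conv].
  have -> : x = lo + (absz (x - lo))%:Z by lia.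
  rewrite row1E; apply: (in_conv_progression (m := m)); rewrite -?row1E ?in_imfset //; lia.
have bound (a : int) c : (forall x, x \in A -> a * x <= c) -> a * p 0 0 <= c.
  move=> h; have := in_conv_le (a := row1 a) (c := c) _ p_conv; rewrite big_ord1 !mxE; apply.
  by move=> _ /imfsetP[x /= hx ->]; rewrite big_ord1 !mxE h.
have h1 : -1 * p 0 0 <= - lo by apply: bound => x /boundA; lia.
have h2 : 1 * p 0 0 <= lo + m%:Z by apply: bound => x /boundA; lia.
have -> : p = row1 (p 0 0) by apply/rowP => i; rewrite (ord1 i) mxE.
by apply: in_imfset; rewrite in_segment; lia.
Qed.

Lemma point2D a b c d : point2 a b + point2 c d = point2 (a + c) (b + d).
Proof. by apply/rowP => j; rewrite !mxE; case: ifP. Qed.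

Lemma point2_eq a b c d : (point2 a b == point2 c d) = (a == c) && (b == d).
Proof.
apply/eqP/andP => [/rowP e | [/eqP -> /eqP ->]] //.
by have := e ord0; have := e ord_max; rewrite !mxE /= => -> ->.
Qed.

Lemma row2_eq (R : Type) (p q : 'rV[R]_2) :
  p 0 ord0 = q 0 ord0 -> p 0 ord_max = q 0 ord_max -> p = q.
Proof.
move=> e0 e1; apply/rowP => j.
by have [->|->] : j = ord0 \/ j = ord_max by
  case: j => [[|[|]]] // ?; [left | right]; apply/val_inj.
Qed.

Lemma point2E (p : 'rV[int]_2) : p = point2 (p 0 ord0) (p 0 ord_max).
Proof. by apply: row2_eq; rewrite !mxE. Qed.

Lemma sum_ord2 (R : nmodType) (F : 'I_2 -> R) : \sum_(i < 2) F i = F ord0 + F ord_max.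
Proof. by rewrite big_ord_recr big_ord1; congr (F _ + _); apply/val_inj. Qed.

Lemma mem_set_ii k1 k2 x y :
  (point2 x y \in set_ii k1 k2) = ((y == 0) && (0 <= x < k1%:Z)) || ((y == 1) && (0 <= x < k2%:Z)).
Proof.
have row_mem c n :
    (point2 x y \in [fset point2 i%:Z c | i in iota 0 n]) = (y == c) && (0 <= x < n%:Z).
  apply/imfsetP/idP => /= [[i /[!mem_iota] hi /eqP] | /andP[/eqP -> hx]].
    by rewrite point2_eq => /andP[/eqP -> ->]; lia.
  by exists (absz x); rewrite ?mem_iota; [lia | apply/eqP; rewrite point2_eq; lia].
by rewrite in_fsetU !row_mem.
Qed.

Lemma F2iso_twoseg_set_ii k1 g k2 : (k1 <= g + 1)%N -> (k2 <= g + 1)%N ->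
  F2iso (twoseg k1 g k2) (set_ii k1 k2).
Proof.
move=> k1_small k2_small; set a2 := (k1 + g)%:Z.
pose phi x := if x < a2 then point2 x 0 else point2 (x - a2) 1.
exists phi; split; [|split].
- move=> x y; rewrite !in_twoseg /phi /a2 => hx hy.
  by case: ifP; case: ifP => ? ? /eqP; rewrite point2_eq; lia.
- apply/fsetP => p; rewrite [p]point2E; move: (p 0 ord0) (p 0 ord_max) => x y.
  rewrite mem_set_ii; apply/imfsetP/idP => /= [[z /[!in_twoseg] hz] | ].
    by rewrite /phi /a2; case: ifP => ? /eqP; rewrite point2_eq => /andP[/eqP -> /eqP ->]; lia.
  case/orP => /and3P[/eqP -> x_ge0 x_lt].
    by exists x; rewrite ?in_twoseg /phi /a2 ?ifT //; lia.
  by exists (x + a2); rewrite ?in_twoseg /phi /a2 ?ifF ?addrK //; lia.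
- move=> x y z t; rewrite !in_twoseg /phi /a2 => hx hy hz ht.
  by case: ifP; case: ifP; case: ifP; case: ifP => ? ? ? ?;
    rewrite !point2D point2_eq; apply/idP/idP; lia.
Qed.

Lemma set_ii_not_in_hyperplane k1 k2 : (1 <= k1)%N -> (1 <= k2)%N -> (3 <= k1 + k2)%N ->
  ~ in_hyperplane (set_ii k1 k2).
Proof.
move=> k1_gt0 k2_gt0 k_gt2 [a [c [a0 hyp]]].
have onH x y : point2 x y \in set_ii k1 k2 -> a 0 ord0 * x%:~R + a 0 ord_max * y%:~R = c.
  by move/hyp; rewrite sum_ord2 !mxE.
have c0 : c = 0 by rewrite -(onH 0 0) ?mulr0 ?addr0 // mem_set_ii; lia.
have a1 : a 0 ord_max = 0 by rewrite -[RHS]c0 -(onH 0 1) ?mulr0 ?mulr1 ?add0r // mem_set_ii; lia.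
have a0' : a 0 ord0 = 0.
  have [k1_gt1 | k1_eq1] := ltnP 1 k1.
    by rewrite -[RHS]c0 -(onH 1 0) ?mulr0 ?mulr1 ?addr0 // mem_set_ii; lia.
  by rewrite -[RHS]c0 -(onH 1 1) ?a1 ?mul0r ?mulr1 ?addr0 // mem_set_ii; lia.
by move/negP: a0; apply; apply/eqP/row2_eq; rewrite mxE.
Qed.

Lemma conv_lattice_count_set_ii k1 k2 : (1 <= k1)%N -> (1 <= k2)%N ->
  conv_lattice_count (set_ii k1 k2) (k1 + k2).
Proof.
move=> k1_gt0 k2_gt0; exists (set_ii k1 k2); split; last first.
  rewrite -(card_F2iso (F2iso_twoseg_set_ii (g := k1 + k2) _ _)) ?card_twoseg //; lia.
move=> p; split => [|p_conv]; first exact: in_conv_mem.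
have bound (al be c : int) :
    (forall x y, point2 x y \in set_ii k1 k2 -> al * x + be * y <= c) ->
    al * p 0 ord0 + be * p 0 ord_max <= c.
  move=> h; have := in_conv_le (a := point2 al be) (c := c) _ p_conv.
  rewrite sum_ord2 !mxE; apply.
  by move=> b; rewrite [b]point2E sum_ord2 !mxE; apply: h.
(* The facets of the trapezoid with vertices (0,0), (k1-1,0), (0,1), (k2-1,1). *)
have [x_ge0 y_le1 y_ge0 left_edge right_edge] : [/\
    -1 * p 0 ord0 + 0 * p 0 ord_max <= 0, 0 * p 0 ord0 + 1 * p 0 ord_max <= 1,
    0 * p 0 ord0 + -1 * p 0 ord_max <= 0,
    1 * p 0 ord0 + - (k2 - k1)%N%:Z * p 0 ord_max <= k1%:Z - 1 &
    1 * p 0 ord0 + (k1 - k2)%N%:Z * p 0 ord_max <= k2%:Z - 1 + (k1 - k2)%N%:Z].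
  by split; apply: bound => x y; rewrite mem_set_ii => /orP[] /and3P[/eqP -> ? ?]; lia.
rewrite [p]point2E mem_set_ii.
move: (p 0 ord0) (p 0 ord_max) x_ge0 y_le1 y_ge0 left_edge right_edge => x y ? ? ? + +.
have [-> | ->] : y = 0 \/ y = 1 by lia.
  by rewrite !mulr0; lia.
by rewrite !mulr1; lia.
Qed.

Lemma sumset_twoseg k1 g k2 : (1 <= k1)%N -> (1 <= k2)%N ->
  sumset (twoseg k1 g k2) =
  segment 0 (2 * k1 - 1) `|` segment (k1 + g)%:Z (k1 + k2 - 1)
    `|` segment (2 * (k1 + g))%:Z (2 * k2 - 1).
Proof.
move=> k1_gt0 k2_gt0; apply/fsetP => s; rewrite !in_fsetU !in_segment.
apply/idP/idP => [/imfset2P[x /[!in_twoseg] hx [y /[!in_twoseg] hy ->]] | hs]; first lia.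
have split_at x : x \in twoseg k1 g k2 -> s - x \in twoseg k1 g k2 ->
    s \in sumset (twoseg k1 g k2).
  by move=> hx hsx; rewrite -(subrKC x s); apply: in_imfset2.
set a2 := (k1 + g)%:Z; set e2 := a2 + k2%:Z - 1.
have [?|?] := leP s (k1%:Z - 1); first by apply: (split_at s); rewrite !in_twoseg; lia.
have [?|?] := leP s (2 * k1%:Z - 2).
  by apply: (split_at (k1%:Z - 1)); rewrite !in_twoseg; lia.
have [?|?] := leP s (a2 + k1%:Z - 1).
  by apply: (split_at (s - a2)); rewrite !in_twoseg /a2; lia.
have [?|?] := leP s (k1%:Z - 1 + e2).
  by apply: (split_at (k1%:Z - 1)); rewrite !in_twoseg /e2 /a2; lia.
have [?|?] := leP s (a2 + e2).
  by apply: (split_at (s - a2)); rewrite !in_twoseg /e2 /a2; lia.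
by apply: (split_at e2); rewrite !in_twoseg /e2 /a2; lia.
Qed.

Lemma card_sumset_twoseg_plane k1 g k2 : (1 <= k1)%N -> (1 <= k2)%N ->
  (k1 <= g + 1)%N -> (k2 <= g + 1)%N ->
  #|` sumset (twoseg k1 g k2)| = (3 * (k1 + k2) - 3)%N.
Proof.
move=> k1_gt0 k2_gt0 k1_small k2_small; rewrite sumset_twoseg //.
rewrite !card_fsetU_disjoint ?card_segment; first lia.
  by apply/fdisjointP => x; rewrite !in_segment; lia.
by apply/fdisjointP => x; rewrite in_fsetU !in_segment; lia.
Qed.

Lemma card_sumset_twoseg_line k1 g k2 : (1 <= k1)%N -> (g + 2 <= k2)%N ->
  #|` sumset (twoseg k1 g k2)| = (2 * (k1 + k2) - 1 + minn (2 * g) (k1 + g - 1))%N.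
Proof.
move=> k1_gt0 k2_large; rewrite sumset_twoseg //; last by lia.
have [k1_large | k1_small] := leqP (g + 1) k1.
  have -> : segment 0 (2 * k1 - 1) `|` segment (k1 + g)%:Z (k1 + k2 - 1)
      `|` segment (2 * (k1 + g))%:Z (2 * k2 - 1) = segment 0 (2 * (k1 + k2) - 1 + 2 * g).
    by apply/fsetP => x; rewrite !in_fsetU !in_segment; lia.
  by rewrite card_segment; congr (_ + _)%N; lia.
have -> : segment 0 (2 * k1 - 1) `|` segment (k1 + g)%:Z (k1 + k2 - 1)
    `|` segment (2 * (k1 + g))%:Z (2 * k2 - 1) =
    segment 0 (2 * k1 - 1) `|` segment (k1 + g)%:Z (k1 + g + 2 * k2 - 1).
  by apply/fsetP => x; rewrite !in_fsetU !in_segment; lia.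
rewrite card_fsetU_disjoint ?card_segment; first lia.
by apply/fdisjointP => x; rewrite !in_segment; lia.
Qed.

Lemma F2iso_int_affine (A : {fset int}) (s c : int) :
  s = 1 \/ s = -1 -> F2iso A [fset s * x + c | x in A].
Proof.
move=> s_unit; exists (fun x => s * x + c); split; [|split] => //.
  by move=> x y _ _ /=; case: s_unit => ->; lia.
by move=> x y z t _ _ _ _; case: s_unit => ->; apply/idP/idP; lia.
Qed.

Lemma twoseg_of_union_two_segments A : union_two_segments A ->
  exists k1 g k2 : nat,
    [/\ (1 <= k1)%N, (k1 <= k2)%N, (2 <= k2)%N, (1 <= g)%N & F2iso A (twoseg k1 g k2)].
Proof.
case=> a1 [b1 [a2 [b2 [a1b1 gap a2b2 long memA]]]].
pose K1 := absz (b1 - a1 + 1)%R; pose G := absz (a2 - b1 - 1)%R; pose K2 := absz (b2 - a2 + 1)%R.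
have [K12 | K21] := leqP K1 K2.
  exists K1, G, K2; split; try lia.
  suff <- : [fset 1 * x + - a1 | x in A] = twoseg K1 G K2 by apply: F2iso_int_affine; left.
  apply/fsetP => y; rewrite in_twoseg; apply/imfsetP/idP => /= [[x /[!memA] hx ->] | hy]; first lia.
  by exists (y + a1); rewrite ?memA; lia.
exists K2, G, K1; split; try lia.
suff <- : [fset -1 * x + b2 | x in A] = twoseg K2 G K1 by apply: F2iso_int_affine; right.
apply/fsetP => y; rewrite in_twoseg; apply/imfsetP/idP => /= [[x /[!memA] hx ->] | hy]; first lia.
by exists (b2 - y); rewrite ?memA; lia.
Qed.

Lemma twoseg_plane k1 g k2 : (1 <= k1)%N -> (2 <= k2)%N -> (k1 <= g + 1)%N -> (k2 <= g + 1)%N ->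
  [/\ F2iso (twoseg k1 g k2) (set_ii k1 k2), is_dim (twoseg k1 g k2) 2,
      is_vol (twoseg k1 g k2) (k1 + k2) &
      #|` sumset (twoseg k1 g k2)| = (3 * (k1 + k2) - 3)%N].
Proof.
move=> k1_gt0 k2_gt1 k1_small k2_small.
have iso := F2iso_twoseg_set_ii k1_small k2_small.
have dim : is_dim (twoseg k1 g k2) 2.
  split; first by exists (set_ii k1 k2); split => //; apply: set_ii_not_in_hyperplane; lia.
  move=> d B notH [phi [_ [phiB hphi]]]; subst B; rewrite leqNgt; apply/negP => d_gt2; apply: notH.
  apply: (in_hyperplane_plane d_gt2) => _ /imfsetP[x hx ->].
  exact: F2hom_twoseg_plane k1_gt0 k2_gt1 (F2iso_on_hom hphi) x hx.
split => //; last by apply: card_sumset_twoseg_plane; lia.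
exists 2%N; split => //; split.
  by exists (set_ii k1 k2); split => //; apply: conv_lattice_count_set_ii; lia.
move=> B n isoB /conv_lattice_count_ge_card.
by rewrite -(card_F2iso isoB) card_twoseg //; lia.
Qed.

Lemma twoseg_line k1 g k2 : (1 <= k1)%N -> (1 <= g)%N -> (g + 2 <= k2)%N ->
  [/\ is_dim (twoseg k1 g k2) 1, is_vol (twoseg k1 g k2) (k1 + g + k2) &
      #|` sumset (twoseg k1 g k2)| = (2 * (k1 + k2) - 1 + minn (2 * g) (k1 + g - 1))%N].
Proof.
move=> k1_gt0 g_gt0 k2_large; set a2 := (k1 + g)%:Z; set top := (k1 + g + k2).-1.
have mem0 : 0 \in twoseg k1 g k2 by rewrite in_twoseg; lia.
have mem_a2 : a2 \in twoseg k1 g k2 by rewrite in_twoseg /a2; lia.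
have mem_a2S : a2 + 1 \in twoseg k1 g k2 by rewrite in_twoseg /a2; lia.
have mem_top : top%:Z \in twoseg k1 g k2 by rewrite in_twoseg /top; lia.
have k2_gt1 : (2 <= k2)%N by lia.
have dim : is_dim (twoseg k1 g k2) 1.
  split.
    exists (row1 @` twoseg k1 g k2); split; last exact: F2iso_row1.
    by apply: (row1_not_in_hyperplane mem0 mem_a2); rewrite /a2; lia.
  move=> d B notH [phi [_ [phiB hphi]]]; subst B; rewrite leqNgt; apply/negP => d_gt1; apply: notH.
  apply: (in_hyperplane_line d_gt1) => _ /imfsetP[x hx ->]; exists x.
  exact: F2hom_twoseg_line k1_gt0 k2_gt1 (F2iso_on_hom hphi) k2_large x hx.
split => //; last by apply: card_sumset_twoseg_line.
exists 1%N; split => //; split.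
  exists (row1 @` twoseg k1 g k2); split; first exact: F2iso_row1.
  rewrite (_ : (k1 + g + k2)%N = top.+1); last by rewrite /top; lia.
  apply: (conv_lattice_count_row1 (lo := 0)); rewrite ?add0r //.
  by move=> x; rewrite in_twoseg /top; lia.
move=> B n [phi [inj [<- hphi]]] count.
set v := phi (a2 + 1) - phi a2.
have v_neq0 : v != 0.
  by rewrite subr_eq0; apply/eqP => /(inj _ _ mem_a2S mem_a2); lia.
have phiE := F2hom_twoseg_line k1_gt0 k2_gt1 (F2iso_on_hom hphi) k2_large.
rewrite (_ : (k1 + g + k2)%N = top.+1); last by rewrite /top; lia.
apply: (conv_lattice_count_ge_progression (p := phi 0) (m := top) v_neq0 _ _ count).
  exact: in_imfset.
by rewrite scaler_intE -phiE // in_imfset.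
Qed.

Lemma nat_set_twoseg k1 g k2 : nat_set (twoseg k1 g k2).
Proof. by move=> x; rewrite in_twoseg; lia. Qed.

Lemma twoseg_not_extremal k1 g k2 : (2 <= k1)%N -> (1 <= g)%N -> (g + 2 <= k2)%N ->
  ~ extremal (twoseg k1 g k2).
Proof.
move=> k1_gt1 g_gt0 k2_large [d [v [dim vol [_ vol_max]]]].
have [dim1 vol1 sum1] := twoseg_line (ltnW k1_gt1) g_gt0 k2_large.
move: vol_max; rewrite -(is_dim_unique dim1 dim) -(is_vol_unique vol1 vol) card_twoseg // sum1.
set b := minn (2 * g) (k1 + g - 1); set k' := (k1 + k2 - 1)%N => vol_max.
have b_gt_g : (g < b)%N by rewrite /b; lia.
have [|||dimb volb sumb] := @twoseg_line 1 b k'; rewrite /k'; try lia.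
have card_eq : #|` twoseg 1 b k'| = (k1 + k2)%N by rewrite card_twoseg /k'; lia.
have sum_eq : #|` sumset (twoseg 1 b k')| = (2 * (k1 + k2) - 1 + b)%N by rewrite sumb /k'; lia.
by have := vol_max _ _ (@nat_set_twoseg 1 b k') card_eq sum_eq dimb volb; rewrite /k'; lia.
Qed.

Lemma set_i_twoseg k b : (1 <= k)%N -> set_i k b = twoseg 1 b (k - 1).
Proof.
have mem_iotaZ m n x : (x \in [fset i%:Z | i in iota m n]) = (m%:Z <= x < (m + n)%:Z).
  apply/imfsetP/idP => /= [[i /[!mem_iota] hi ->] | hx]; first lia.
  by exists (absz x); rewrite ?mem_iota; lia.
by move=> k_gt0; apply/fsetP => x; rewrite in_fsetD !mem_iotaZ in_twoseg; apply/idP/idP; lia.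
Qed.

(* Keeps [A] an explicit argument of [lemma4p4]. *)
Unset Implicit Arguments.
Theorem lemma4p4 (A : {fset int}) :
  extremal A -> union_two_segments A ->
  let k := #|` A| in
  (exists b : nat, [/\ (1 <= b)%N, (b + 3 <= k)%N, F2iso A (set_i k b)
      & [/\ is_dim A 1, is_vol A (k + b) & #|` sumset A| = (2 * k - 1 + b)%N]])
  \/
  (exists k1 k2 : nat, [/\ (1 <= k1)%N, (1 <= k2)%N, (k1 + k2 = k)%N,
      F2iso A (set_ii k1 k2) &
      [/\ is_dim A 2, is_vol A k & #|` sumset A| = (3 * k - 3)%N]]).
Proof.
move=> ext /twoseg_of_union_two_segments[k1 [g [k2 [k1_gt0 k12 k2_gt1 g_gt0 iso]]]] k.
have k_eq : k = (k1 + k2)%N by rewrite /k (card_F2iso iso) card_twoseg.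
have iso_inv := F2iso_sym iso.
rewrite /k (card_sumset_F2iso iso) -/k k_eq.
have [k2_small | k2_large] : (k2 <= g + 1)%N \/ (g + 2 <= k2)%N by lia.
  have [iso' dim vol sum] := twoseg_plane k1_gt0 k2_gt1 (leq_trans k12 k2_small) k2_small.
  right; exists k1, k2; split => //; first by lia.
    exact: F2iso_trans iso iso'.
  by split; [apply: is_dim_F2iso iso_inv dim | apply: is_vol_F2iso iso_inv vol | ].
have [dim vol sum] := twoseg_line k1_gt0 g_gt0 k2_large.
have k1_eq1 : k1 = 1%N.
  apply/eqP; rewrite eqn_leq k1_gt0 andbT leqNgt; apply/negP => k1_gt1.
  exact: twoseg_not_extremal k1_gt1 g_gt0 k2_large (extremal_F2iso iso ext).
subst k1; left; exists g; split => //; first by lia.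
  by rewrite set_i_twoseg // addKn.
split; [exact: is_dim_F2iso iso_inv dim | | by rewrite sum; lia].
by rewrite addnAC; exact: is_vol_F2iso iso_inv vol.
Qed.
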